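(* Let $n\ge 2$, $0\le m\le n$ and $k$ generic. Among linear combinations of the currents $A_j$, $Q_\pm$, $Y$ (i.e. dimension-one fields of zero momentum in $\mathcal{V}_\xi$), those commuting with all screenings of the $n[m]$ realization form a one-dimensional space, spanned by $$\mathcal{H}^{(k)}_{n[m]}(z)=\ell_n(k)Y(z)+\sum_{i=1}^{n-m-1}\frac{n-i-m}{n}A_i(z)+\frac{n-m}{n}Q_+(z)-\sum_{i=-m+1}^{-1}\frac{m+i}{n}A_i(z)-\frac{m}{n}Q_-(z),$$ which satisfies $\mathcal{H}^{(k)}_{n[m]}(z)\mathcal{H}^{(k)}_{n[m]}(w)\sim \ell_n(k)(z-w)^{-2}$, where $\ell_n(k)=\frac{n-1}{n}k+n-2$.
   Context: Setup. Fix integers $n\ge 2$ and $0\le m\le n$, a generic complex number $k$ (in particular $k\neq -n$), and put $K=k+n$. Let $\varphi=(\varphi_1,\dots,\varphi_{n+1})$ be free scalar fields with OPE $\partial\varphi_i(z)\partial\varphi_j(w)\sim\delta_{ij}(z-w)^{-2}$, and let $(\,,\,)$ be the standard symmetric bilinear form on $\mathbb{C}^{n+1}$. Choose vectors $a_i$ ($1\le i\le n-m-1$), $a_{-i}$ ($1\le i\le m-1$), $\psi_+$ (present iff $m\le n-1$), $\psi_-$ (present iff $m\ge 1$), and $\xi$ in $\mathbb{C}^{n+1}$ whose nonzero pairwise products are: $(a_j,a_j)=2K$ for every $a_j$ present; $(a_i,a_{i+1})=-K$ for $1\le i\le n-m-2$; $(a_{-i},a_{-i-1})=-K$ for $1\le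 i\le m-2$; $(a_1,\psi_+)=-K$; $(a_{-1},\psi_-)=-K$; $(\psi_\pm,\psi_\pm)=1$; $(\psi_+,\psi_-)=K-1$; $(\psi_+,\xi)=1$; $(\psi_-,\xi)=-1$; all other products (including $(\xi,\xi)$ and $(a_j,\xi)$) vanish. Define currents $A_j=(a_j,\partial\varphi)$, $Q_\pm=(\psi_\pm,\partial\varphi)$, $Y=(\xi,\partial\varphi)$ and the field $\Xi=(\xi,\varphi)$. The screening operators are $E_j=\oint e^{(a_j,\varphi)}$ for each $a_j$ present and $\Psi_\pm=\oint e^{(\psi_\pm,\varphi)}$ for each $\psi_\pm$ present. Let $\mathcal{V}_\xi$ be the space of fields $:P(\partial\varphi)e^{p\Xi}:$, $p\in\mathbb{Z}$, with $P$ a normal-ordered differential polynomial in the components of $\partial\varphi$. A field $X(w)$ commutes with a screening $\oint s(z)\,dz$ if the residue at $z=w$ of the OPE $s(z)X(w)$ vanishes. Terms involving absent vectors (e.g. $Q_-$ when $m=0$) are omitted. *)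

From HB Require Import structures.
From mathcomp Require Import all_boot all_algebra.
From mathcomp Require Import reals Rstruct complex.
Unset Printing Implicit Defensive.
Import GRing.Theory.
Local Open Scope ring_scope.

Definition C : numClosedFieldType := complex Rdefinitions.R.

(* Labels of the vectors of the n[m] realization:
   VA i = a_i (i>=1), VB i = a_{-i} (i>=1), VP = psi_+, VM = psi_-, VX = xi. *)
Inductive vlabel := VA of nat | VB of nat | VP | VM | VX.

Definition vlabel_eqb (x y : vlabel) : bool :=
  match x, y with
  | VA i, VA j => i == j
  | VB i, VB j => i == j
  | VP, VP | VM, VM | VX, VX => true
  | _, _ => false
  end.

Lemma vlabel_eqP : Equality.axiom vlabel_eqb.
Proof.
case=> [i|i|||] [j|j|||] /=; try (by constructor);
  by apply: (iffP eqP); [move=> -> | case].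
Qed.

HB.instance Definition _ := hasDecEq.Build vlabel vlabel_eqP.

Definition labels (n m : nat) : seq vlabel :=
  [seq VA i | i <- iota 1 (n - m - 1)] ++
  [seq VB i | i <- iota 1 (m - 1)] ++
  (if (m < n)%N then [:: VP] else [::]) ++
  (if (0 < m)%N then [:: VM] else [::]) ++ [:: VX].

(* The prescribed Gram matrix (K = k + n); only used on present labels. *)
Definition gram (K : C) (x y : vlabel) : C :=
  match x, y with
  | VA i, VA j => if i == j then 2 * K
                  else if (i.+1 == j) || (j.+1 == i) then - K else 0
  | VB i, VB j => if i == j then 2 * K
                  else if (i.+1 == j) || (j.+1 == i) then - K else 0
  | VA i, VP | VP, VA i => if i == 1%N then - K else 0
  | VB i, VM | VM, VB i => if i == 1%N then - K else 0
  | VP, VP => 1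
  | VM, VM => 1
  | VP, VM | VM, VP => K - 1
  | VP, VX | VX, VP => 1
  | VM, VX | VX, VM => -1
  | _, _ => 0
  end.

Definition bform {N : nat} (u w : 'rV[C]_N) : C := (u *m w^T) 0 0.

Definition realizes (n m : nat) (K : C) (v : vlabel -> 'rV[C]_(n.+1)) : Prop :=
  forall x y, x \in labels n m -> y \in labels n m -> bform (v x) (v y) = gram K x y.

(* Fields of V_xi of dimension one and zero momentum that are linear
   combinations of the currents: a current (u, d phi) is represented by u. *)
Definition lin_comb_currents (n m : nat) (v : vlabel -> 'rV[C]_(n.+1))
  (u : 'rV[C]_(n.+1)) : Prop :=
  exists c : vlabel -> C, u = \sum_(x <- labels n m) c x *: v x.

(* Free-field OPE (Wick): e^{(s,phi)}(z) (u,d phi)(w) ~ -(s,u)/(z-w) e^{(s,phi)}(w),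
   so the residue at z = w is -(s,u) e^{(s,phi)}(w); since e^{(s,phi)} is a
   nonzero field, the current commutes with the screening iff this
   coefficient vanishes. *)
Definition screening_residue_coef {N : nat} (s u : 'rV[C]_N) : C := - bform s u.

Definition commutes_with_screening {N : nat} (s u : 'rV[C]_N) : Prop :=
  screening_residue_coef s u = 0.

(* (u,d phi)(z) (w,d phi)(w') ~ (u,w) (z-w')^{-2}: the coefficient of the
   double pole in the OPE of two currents. *)
Definition ope_double_pole {N : nat} (u w : 'rV[C]_N) : C := bform u w.

Definition ell (n : nat) (k : C) : C := (n%:R - 1) / n%:R * k + n%:R - 2.

Definition Hvec (n m : nat) (k : C) (v : vlabel -> 'rV[C]_(n.+1)) : 'rV[C]_(n.+1) :=
  ell n k *: v VX
  + \sum_(i <- iota 1 (n - m - 1)) ((n%:R - i%:R - m%:R) / n%:R) *: v (VA i)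
  + ((n%:R - m%:R) / n%:R) *: v VP
  - \sum_(i <- iota 1 (m - 1)) ((m%:R - i%:R) / n%:R) *: v (VB i)
  - (m%:R / n%:R) *: v VM.

From HB Require Import structures.
From mathcomp Require Import all_boot all_algebra.
From mathcomp Require Import reals Rstruct complex.
From mathcomp Require Import zify ring.
Import GRing.Theory Num.Theory.
Local Open Scope ring_scope.

(* The coefficient vector h of H solves G h = e_xi for the prescribed Gram
   matrix G of the realization: H is orthogonal to every screening vector and
   (xi, H) = 1, so (H, H) = h_xi = l_n(k), which vanishes for a single value
   of k.  For K != 0 the matrix G is nondegenerate, so a combination u with
   coefficients c that is orthogonal to all screening vectors satisfies
   G (c - (xi, u) h) = 0, i.e. u = (xi, u) H. *)

Lemma bform_sumr N (I : Type) (s : seq I) (c : I -> C) (u : 'rV[C]_N)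
    (w : I -> 'rV[C]_N) :
  bform u (\sum_(x <- s) c x *: w x) = \sum_(x <- s) c x * bform u (w x).
Proof.
rewrite /bform raddf_sum mulmx_sumr summxE; apply: eq_bigr => x _ /=.
by rewrite linearZ -scalemxAr mxE.
Qed.

Lemma bformZr N (u w : 'rV[C]_N) a : bform u (a *: w) = a * bform u w.
Proof. by rewrite /bform linearZ -scalemxAr mxE. Qed.

Lemma bformC N (u w : 'rV[C]_N) : bform u w = bform w u.
Proof. by rewrite /bform -[u *m w^T]trmxK trmx_mul trmxK mxE. Qed.

Lemma commutes_with_screeningE N (s u : 'rV[C]_N) :
  commutes_with_screening s u <-> bform s u = 0.
Proof.
rewrite /commutes_with_screening /screening_residue_coef.
by split=> [/eqP|->]; rewrite ?oppr0 // oppr_eq0 => /eqP.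
Qed.

Definition gram_apply {I : eqType} (s : seq I) (G : I -> I -> C) (d : I -> C)
  (y : I) : C := \sum_(x <- s) d x * G y x.

Definition restrict {I : eqType} (s : seq I) (f : I -> C) (x : I) : C :=
  if x \in s then f x else 0.

Lemma restrict_in {I : eqType} {s : seq I} (f : I -> C) {x : I} :
  x \in s -> restrict s f x = f x.
Proof. by rewrite /restrict => ->. Qed.

Lemma restrict_out {I : eqType} {s : seq I} (f : I -> C) {x : I} :
  x \notin s -> restrict s f x = 0.
Proof. by rewrite /restrict => /negbTE ->. Qed.

Section DualVector.

Context {N : nat} {I : eqType} {s : seq I} {G : I -> I -> C}.
Context {v : I -> 'rV[C]_N}.
Hypothesis v_gram : forall x y, x \in s -> y \in s -> bform (v x) (v y) = G x y.

Lemma bform_span d y : y \in s ->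
  bform (v y) (\sum_(x <- s) d x *: v x) = gram_apply s G d y.
Proof.
by move=> ys; rewrite bform_sumr; apply: eq_big_seq => x xs; rewrite v_gram.
Qed.

Context {x0 : I} {h : I -> C}.
Hypothesis h_dual : forall y, y \in s -> gram_apply s G h y = (y == x0)%:R.
Let H := \sum_(x <- s) h x *: v x.

Lemma bform_dual y : y \in s -> bform (v y) H = (y == x0)%:R.
Proof. by move=> ys; rewrite bform_span ?h_dual. Qed.

Lemma bform_dual_self : uniq s -> x0 \in s -> bform H H = h x0.
Proof.
move=> s_uniq x0s; rewrite {2}/H bform_sumr.
rewrite (eq_big_seq (fun x => h x * (x == x0)%:R)) => [|x xs]; last first.
  by rewrite bformC bform_dual.
rewrite (big_rem x0) //= eqxx mulr1 big1_seq ?addr0 // => x /andP[_ xrem].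
have [ex|] := eqVneq x x0; last by rewrite mulr0.
by rewrite ex mem_rem_uniqF in xrem.
Qed.

Lemma dual_neq0 : uniq s -> x0 \in s -> h x0 != 0 -> H != 0.
Proof.
move=> s_uniq x0s; apply: contra_neq => H0.
by rewrite -bform_dual_self // H0 /bform mul0mx mxE.
Qed.

Hypothesis G_nondeg : forall d, (forall y, y \in s -> gram_apply s G d y = 0) ->
  {in s, forall x, d x = 0}.

Lemma orthogonal_dualP c :
  (forall y, y \in s -> y != x0 -> bform (v y) (\sum_(x <- s) c x *: v x) = 0)
  <-> exists a, \sum_(x <- s) c x *: v x = a *: H.
Proof.
split=> [c_orth | [a ->] y ys yx0]; last first.
  by rewrite bformZr bform_dual // (negbTE yx0) mulr0.
set a := bform (v x0) (\sum_(x <- s) c x *: v x).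
have ker y : y \in s -> gram_apply s G (fun x => c x - a * h x) y = 0.
  move=> ys; transitivity (gram_apply s G c y - a * gram_apply s G h y).
    by rewrite /gram_apply mulr_sumr -sumrB; apply: eq_bigr => x _; ring.
  rewrite -bform_span // h_dual //; have [->|yx0] := eqVneq y x0.
    by rewrite mulr1 subrr.
  by rewrite c_orth // mulr0 subr0.
exists a; rewrite /H scaler_sumr; apply: eq_big_seq => x xs; rewrite scalerA.
congr (_ *: _); apply/eqP; rewrite -subr_eq0; apply/eqP.
exact: G_nondeg ker x xs.
Qed.

End DualVector.

Lemma second_diff0_affine {R : comPzRingType} {a : nat -> R} {L : nat} :
  (forall i, (0 < i < L)%N -> 2 * a i - a i.+1 - a i.-1 = 0) ->
  forall i, (i <= L)%N -> a i = a 0%N + i%:R * (a 1%N - a 0%N).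
Proof.
move=> rec.
have step i : (i < L)%N -> a i.+1 - a i = a 1%N - a 0%N.
  elim: i => [//|i IH] iL; rewrite -IH; last by lia.
  by rewrite -[LHS]addr0 -(rec i.+1) /=; [ring | lia].
elim=> [|i IH] iL; first by rewrite mul0r addr0.
rewrite -[a i.+1](subrK (a i)) step // IH; last by lia.
by rewrite -natr1; ring.
Qed.

Lemma second_diff0_end0 {R : comPzRingType} {a : nat -> R} {L : nat} :
  (forall i, (0 < i < L)%N -> 2 * a i - a i.+1 - a i.-1 = 0) -> a L = 0 ->
  forall i, (i <= L)%N -> L%:R * a i = (L%:R - i%:R) * a 0%N.
Proof.
move=> rec aL0 i iL.
have slope : L%:R * (a 1%N - a 0%N) = - a 0%N.
  by apply/eqP; rewrite -addr_eq0 addrC -(second_diff0_affine rec L) ?aL0.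
by rewrite (second_diff0_affine rec i iL) mulrDr mulrCA slope; ring.
Qed.

Lemma VA_inj : injective VA. Proof. by move=> i j []. Qed.
Lemma VB_inj : injective VB. Proof. by move=> i j []. Qed.

Lemma mem_map_VA (s : seq nat) x :
  (x \in [seq VA i | i <- s]) = if x is VA j then j \in s else false.
Proof.
by case: x => [j|j|||]; rewrite ?(mem_map VA_inj) //; apply/negbTE/mapP => -[].
Qed.

Lemma mem_map_VB (s : seq nat) x :
  (x \in [seq VB i | i <- s]) = if x is VB j then j \in s else false.
Proof.
by case: x => [j|j|||]; rewrite ?(mem_map VB_inj) //; apply/negbTE/mapP => -[].
Qed.

Lemma mem_labels n m x : (x \in labels n m) =
  match x with
  | VA j => (0 < j < n - m)%N
  | VB j => (0 < j < m)%N
  | VP => (m < n)%N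
  | VM => (0 < m)%N
  | VX => true
  end.
Proof.
rewrite /labels !mem_cat mem_map_VA mem_map_VB.
by case: x => [j|j|||]; rewrite ?mem_iota; do 2!case: ifP;
  rewrite ?inE /eq_op /=; lia.
Qed.

Lemma labels_uniq n m : uniq (labels n m).
Proof.
rewrite /labels !cat_uniq !has_cat !has_map (map_inj_uniq VA_inj).
rewrite (map_inj_uniq VB_inj) !iota_uniq.
by case: ifP; case: ifP => _ _ /=;
  rewrite ?mem_map_VA ?mem_map_VB ?inE /eq_op /= ?orbF ?andbT;
  apply/hasPn => j _; rewrite /= mem_map_VA.
Qed.

Lemma big_labels (V : nmodType) n m (F : vlabel -> V) :
  (forall x, x \notin labels n m -> F x = 0) ->
  \sum_(x <- labels n m) F x = \sum_(j <- iota 1 (n - m - 1)) F (VA j)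
    + \sum_(j <- iota 1 (m - 1)) F (VB j) + F VP + F VM + F VX.
Proof.
move=> F_supp; rewrite /labels !big_cat !big_map /= !addrA.
have FP : (m < n)%N = false -> F VP = 0.
  by move=> mn; rewrite F_supp ?mem_labels ?mn.
have FM : (0 < m)%N = false -> F VM = 0.
  by move=> m0; rewrite F_supp ?mem_labels ?m0.
by case: ifP => [_|/FP->]; case: ifP => [_|/FM->];
  rewrite !big_cons !big_nil ?addr0.
Qed.

Lemma sumr_mul0 (I : Type) (r : seq I) (F : I -> C) : \sum_(i <- r) F i * 0 = 0.
Proof. by rewrite big1 // => i _; rewrite mulr0. Qed.

Lemma sum_iota_pick (F : nat -> C) c p i : (~~ (0 < i <= p)%N -> F i = 0) ->
  \sum_(j <- iota 1 p) F j * (if j == i then c else 0) = F i * c.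
Proof.
move=> F_out; rewrite (eq_bigr (fun j => if j == i then F j * c else 0)).
  have -> : iota 1 p = index_iota 1 p.+1 by rewrite /index_iota subn1.
  rewrite -big_mkcond big_nat1_eq ltnS.
  by case: ifP => // /negbT/F_out ->; rewrite mul0r.
by move=> j _; case: ifP; rewrite ?mulr0.
Qed.

Definition tridiag (K : C) (i j : nat) : C :=
  if i == j then 2 * K else if (i.+1 == j) || (j.+1 == i) then - K else 0.

(* The coefficients along one arm of the diagram: index 0 is the node psi+
   (resp. psi-), carrying e, and index j > 0 is a_j (resp. a_-j); the value
   a 0 is ignored. *)
Definition arm (e : C) (a : nat -> C) (j : nat) : C := if j is 0 then e else a j.

Lemma sum_tridiag_arm K (e : C) (a : nat -> C) p i : (0 < i <= p)%N ->
  a 0%N = 0 -> a p.+1 = 0 ->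
  \sum_(j <- iota 1 p) a j * tridiag K i j + e * (if i == 1%N then - K else 0)
  = K * (2 * arm e a i - arm e a i.+1 - arm e a i.-1).
Proof.
move=> ip a0 ap.
have tridiagE j : tridiag K i j = (if j == i then 2 * K else 0)
    + (if j == i.+1 then - K else 0) + (if j == i.-1 then - K else 0).
  by rewrite /tridiag; do ![case: ifP => ?]; rewrite ?addr0 ?add0r //; lia.
under eq_bigr do rewrite tridiagE !mulrDr.
rewrite !big_split /= !sum_iota_pick; last 3 first.
- by move=> out; rewrite (_ : i.-1 = 0%N) //; lia.
- by move=> out; rewrite (_ : i.+1 = p.+1) //; lia.
- by rewrite ip.
by case: i ip {tridiagE} => [//|[|i]] _ /=; rewrite ?a0; ring.
Qed.

Section GramKernel.

Context {n m : nat} {K : C} {d : vlabel -> C}.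
Hypothesis d_supp : forall x, x \notin labels n m -> d x = 0.
Local Notation Gd := (gram_apply (labels n m) (gram K) d).
Local Notation armA := (arm (d VP) (d \o VA)).
Local Notation armB := (arm (d VM) (d \o VB)).

Lemma gram_apply_labels y : Gd y =
  \sum_(j <- iota 1 (n - m - 1)) d (VA j) * gram K y (VA j)
  + \sum_(j <- iota 1 (m - 1)) d (VB j) * gram K y (VB j)
  + d VP * gram K y VP + d VM * gram K y VM + d VX * gram K y VX.
Proof. by rewrite /gram_apply big_labels // => x /d_supp ->; rewrite mul0r. Qed.

Lemma gram_row_VX : Gd VX = d VP - d VM.
Proof.
by rewrite gram_apply_labels /= !sumr_mul0 mulr1 mulrN1 mulr0 !add0r addr0.
Qed.

Lemma gram_row_VP : Gd VP = - K * d (VA 1) + d VP + (K - 1) * d VM + d VX.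
Proof.
rewrite gram_apply_labels /= sumr_mul0 sum_iota_pick => [|out]; first by ring.
by apply: d_supp; rewrite mem_labels; lia.
Qed.

Lemma gram_row_VM : Gd VM = - K * d (VB 1) + (K - 1) * d VP + d VM - d VX.
Proof.
rewrite gram_apply_labels /= sumr_mul0 sum_iota_pick => [|out]; first by ring.
by apply: d_supp; rewrite mem_labels; lia.
Qed.

Lemma gram_row_VA i : (0 < i < n - m)%N ->
  Gd (VA i) = K * (2 * armA i - armA i.+1 - armA i.-1).
Proof.
move=> i_in; rewrite gram_apply_labels /= sumr_mul0 !mulr0 !addr0.
by apply: sum_tridiag_arm; [lia | apply: d_supp; rewrite mem_labels; lia ..].
Qed.

Lemma gram_row_VB i : (0 < i < m)%N ->
  Gd (VB i) = K * (2 * armB i - armB i.+1 - armB i.-1).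
Proof.
move=> i_in; rewrite gram_apply_labels /= sumr_mul0 !mulr0 add0r !addr0.
by apply: sum_tridiag_arm; [lia | apply: d_supp; rewrite mem_labels; lia ..].
Qed.

(* Along each arm the kernel equations make the coefficients an arithmetic
   progression running from the psi-coefficient to 0 one step past the arm;
   the psi+ and psi- rows then force the psi-coefficients to vanish. *)
Lemma gram_ker_supported : (0 < n)%N -> K != 0 ->
  (forall y, y \in labels n m -> Gd y = 0) -> forall x, d x = 0.
Proof.
move=> n_gt0 K_neq0 Gd0.
have armA_lin i : (i <= n - m)%N ->
    (n - m)%:R * armA i = ((n - m)%:R - i%:R) * d VP.
  apply: second_diff0_end0 => [j j_in|].
    move: (Gd0 (VA j)); rewrite mem_labels gram_row_VA // => /(_ j_in) /eqP.
    by rewrite mulf_eq0 (negbTE K_neq0) => /eqP.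
  by case E : (n - m)%N => [|L] /=; apply: d_supp; rewrite mem_labels; lia.
have armB_lin i : (i <= m)%N -> m%:R * armB i = (m%:R - i%:R) * d VM.
  apply: second_diff0_end0 => [j j_in|].
    move: (Gd0 (VB j)); rewrite mem_labels gram_row_VB // => /(_ j_in) /eqP.
    by rewrite mulf_eq0 (negbTE K_neq0) => /eqP.
  by case E : m => [|L] /=; apply: d_supp; rewrite mem_labels; lia.
have dPM : d VP = d VM.
  by apply/eqP; rewrite -subr_eq0 -gram_row_VX Gd0 ?mem_labels.
have dP0 : d VP = 0.
  have [m0|m_gt0] := posnP m; first by rewrite dPM d_supp // mem_labels m0.
  have [mn|nm] := ltnP m n; last by apply: d_supp; rewrite mem_labels; lia.
  have eA := armA_lin 1%N ltac:(lia); have eB := armB_lin 1%N ltac:(lia).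
  rewrite /= mulr1n -dPM in eA eB.
  have ePM : K * (2 * d VP - d (VA 1) - d (VB 1)) = 0.
    transitivity (Gd VP + Gd VM); last by rewrite !Gd0 ?addr0 ?mem_labels.
    by rewrite gram_row_VP gram_row_VM -dPM; ring.
  move/eqP: ePM; rewrite mulf_eq0 (negbTE K_neq0) => /eqP ePM.
  have : n%:R * d VP = 0.
    transitivity (((n - m)%:R + m%:R) * d VP).
      by rewrite -natrD subnK // ltnW.
    transitivity ((n - m)%:R * m%:R * (2 * d VP - d (VA 1) - d (VB 1))
      + m%:R * ((n - m)%:R * d (VA 1) - ((n - m)%:R - 1) * d VP)
      + (n - m)%:R * (m%:R * d (VB 1) - (m%:R - 1) * d VP)); first by ring.
    by rewrite eA eB ePM !subrr !mulr0 !addr0.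
  by move/eqP; rewrite mulf_eq0 pnatr_eq0 => /orP[|/eqP //]; lia.
have dA0 i : d (VA i) = 0.
  have [|/d_supp //] := boolP (VA i \in labels n m); rewrite mem_labels => i_in.
  have := armA_lin i ltac:(lia); rewrite dP0 mulr0.
  case: i i_in => [//|i] i_in /= /eqP.
  by rewrite mulf_eq0 pnatr_eq0 => /orP[|/eqP //]; lia.
have dB0 i : d (VB i) = 0.
  have [|/d_supp //] := boolP (VB i \in labels n m); rewrite mem_labels => i_in.
  have := armB_lin i ltac:(lia); rewrite -dPM dP0 mulr0.
  case: i i_in => [//|i] i_in /= /eqP.
  by rewrite mulf_eq0 pnatr_eq0 => /orP[|/eqP //]; lia.
have dX0 : d VX = 0.
  have [mn|nm] := ltnP m n.
    move: (Gd0 VP); rewrite mem_labels gram_row_VP dA0 -dPM dP0.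
    by rewrite !mulr0 !add0r => /(_ mn).
  move: (Gd0 VM); rewrite mem_labels gram_row_VM dB0 -dPM dP0 !mulr0 !add0r.
  by move=> /(_ ltac:(lia)) /eqP; rewrite oppr_eq0 => /eqP.
by case=> [i|i|||]; rewrite ?dA0 ?dB0 -?dPM.
Qed.

End GramKernel.

Lemma gram_nondeg n m (K : C) : (0 < n)%N -> K != 0 -> forall d,
  (forall y, y \in labels n m -> gram_apply (labels n m) (gram K) d y = 0) ->
  {in labels n m, forall x, d x = 0}.
Proof.
move=> n_gt0 K_neq0 d Gd0 x xs; rewrite -(restrict_in d xs).
apply: (gram_ker_supported _ n_gt0 K_neq0) => [y /restrict_out // | y ys].
by rewrite -(Gd0 y ys); apply: eq_big_seq => z zs; rewrite restrict_in.
Qed.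

Definition Hcoef n m k : vlabel -> C := restrict (labels n m) (fun x =>
  match x with
  | VA i => (n%:R - i%:R - m%:R) / n%:R
  | VB i => - ((m%:R - i%:R) / n%:R)
  | VP => (n%:R - m%:R) / n%:R
  | VM => - (m%:R / n%:R)
  | VX => ell n k
  end).

Section Hcoef.

Variables (n m : nat) (k : C).
Local Notation h := (Hcoef n m k).

Lemma Hcoef_armA j : (m <= n)%N -> (j <= n - m)%N ->
  arm (h VP) (h \o VA) j = (n%:R - m%:R - j%:R) / n%:R.
Proof.
case: j => [|j] m_le_n j_le /=; rewrite /Hcoef /restrict mem_labels.
  case: ltnP => [_|nm]; first by ring.
  by rewrite (_ : m = n) ?subrr ?subr0 ?mul0r //; lia.
case: ifP => [_|j_out]; first by ring.
by rewrite (_ : j.+1 = n - m)%N ?natrB ?subrr ?mul0r //; lia.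
Qed.

Lemma Hcoef_armB j : (j <= m)%N ->
  arm (h VM) (h \o VB) j = - ((m%:R - j%:R) / n%:R).
Proof.
case: j => [|j] j_le /=; rewrite /Hcoef /restrict mem_labels.
  by case: (posnP m) => [->|_]; rewrite subr0 ?mulr0n ?mul0r ?oppr0.
case: ifP => [_|j_out] //.
by rewrite (_ : j.+1 = m) ?subrr ?mul0r ?oppr0 //; lia.
Qed.

Lemma Hcoef_VX : h VX = ell n k.
Proof. by rewrite /Hcoef restrict_in ?mem_labels. Qed.

Lemma Hcoef_dual : (0 < n)%N -> (m <= n)%N -> forall y, y \in labels n m ->
  gram_apply (labels n m) (gram (k + n%:R)) h y = (y == VX)%:R.
Proof.
move=> n_gt0 m_le_n.
have h_supp x : x \notin labels n m -> h x = 0 by exact: restrict_out.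
have n_neq0 : n%:R != 0 :> C by rewrite pnatr_eq0 -lt0n.
have hA1 := Hcoef_armA 1 m_le_n; have hB1 := Hcoef_armB 1.
have hP := Hcoef_armA 0 m_le_n; have hM := Hcoef_armB 0.
rewrite /= in hA1 hB1 hP hM.
case=> [i|i|||]; rewrite mem_labels => y_in /=.
- rewrite gram_row_VA // !Hcoef_armA //; try lia.
  by case: i y_in => [//|i] _; ring.
- rewrite gram_row_VB // !Hcoef_armB; try lia.
  by case: i y_in => [//|i] _; ring.
- by rewrite gram_row_VP // hA1 ?hP ?hM ?Hcoef_VX /ell //; [field | lia].
- by rewrite gram_row_VM // hB1 ?hP ?hM ?Hcoef_VX /ell //; field.
- by rewrite gram_row_VX // hP ?hM //; field.
Qed.

Lemma Hvec_sum v : (m <= n)%N ->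
  Hvec n m k v = \sum_(x <- labels n m) h x *: v x.
Proof.
move=> m_le_n.
rewrite big_labels => [|x x_out]; last by rewrite /Hcoef restrict_out ?scale0r.
have hA : \sum_(j <- iota 1 (n - m - 1)) h (VA j) *: v (VA j)
    = \sum_(j <- iota 1 (n - m - 1)) ((n%:R - j%:R - m%:R) / n%:R) *: v (VA j).
  apply: eq_big_seq => j; rewrite mem_iota => j_in.
  by rewrite /Hcoef restrict_in // mem_labels; lia.
have hB : \sum_(j <- iota 1 (m - 1)) h (VB j) *: v (VB j)
    = - \sum_(j <- iota 1 (m - 1)) ((m%:R - j%:R) / n%:R) *: v (VB j).
  rewrite -sumrN; apply: eq_big_seq => j; rewrite mem_iota => j_in.
  by rewrite /Hcoef restrict_in ?scaleNr // mem_labels; lia.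
have /= hP := Hcoef_armA 0 m_le_n (leq0n _).
have /= hM := Hcoef_armB 0 (leq0n _).
rewrite hA hB hP hM Hcoef_VX /Hvec !subr0 scaleNr [RHS]addrC !addrA.
by congr (_ - _); rewrite addrAC.
Qed.

End Hcoef.

Definition ell_root n : C := (2 - n%:R) * n%:R / (n%:R - 1).

Lemma ell_neq0 n k : (1 < n)%N -> k != ell_root n -> ell n k != 0.
Proof.
move=> n_gt1.
have n_neq0 : n%:R != 0 :> C by rewrite pnatr_eq0; lia.
have n1_neq0 : n%:R - 1 != 0 :> C by rewrite subr_eq0 pnatr_eq1; lia.
have -> : ell n k = (n%:R - 1) / n%:R * (k - ell_root n).
  by rewrite /ell /ell_root; field; apply/andP.
move=> k_neq; rewrite !mulf_eq0 invr_eq0 (negbTE n1_neq0) (negbTE n_neq0).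
by rewrite subr_eq0 (negbTE k_neq).
Qed.

Theorem lemma2p1 (n m : nat) (Hn : (2 <= n)%N) (Hm : (m <= n)%N) :
  exists S : seq C, forall k : C, k + n%:R != 0 -> k \notin S ->
  forall v : vlabel -> 'rV[C]_(n.+1), realizes n m (k + n%:R) v ->
    [/\ Hvec n m k v != 0,
        lin_comb_currents n m v (Hvec n m k v),
        (forall u, lin_comb_currents n m v u ->
           ((forall x, x \in labels n m -> x != VX ->
                commutes_with_screening (v x) u)
            <-> exists a : C, u = a *: Hvec n m k v))
      & ope_double_pole (Hvec n m k v) (Hvec n m k v) = ell n k].
Proof.
exists [:: ell_root n] => k K_neq0 k_generic v v_gram.
have n_gt0 : (0 < n)%N by lia.
have X_in : VX \in labels n m by rewrite mem_labels.
have h_dual := Hcoef_dual n m k n_gt0 Hm.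
have nondeg := gram_nondeg n m _ n_gt0 K_neq0.
rewrite (Hvec_sum n m k v Hm); split.
- apply: (dual_neq0 v_gram h_dual (labels_uniq n m) X_in).
  by rewrite Hcoef_VX ell_neq0 // -mem_seq1.
- by exists (Hcoef n m k).
- move=> u [c ->]; rewrite -(orthogonal_dualP v_gram h_dual nondeg).
  by split=> orth y ys /(orth y ys) /commutes_with_screeningE.
- rewrite /ope_double_pole (bform_dual_self v_gram h_dual) ?labels_uniq //.
  exact: Hcoef_VX.
Qed.
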